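(* Let $k$ be a domain, $R = k[X_0,\dots,X_m]/J$ a graded domain with $X_0,\dots,X_m$ variables of positive integer weights $A_0,\dots,A_m$ and $J$ a homogeneous ideal, let $A=\operatorname{lcm}(A_0,\dots,A_m)$ and $I=R_{\ge mA}$. Let $p\ge 2$ be an integer. If $I^{p-1}=R_{\ge (p-1)mA}$, then $I^p = R_{\ge pmA}$.
   Context: $R$ is $\mathbb N$-graded via $\deg X_i=A_i$, and $X_i$ also denotes its image in $R$. For a nonnegative integer $\alpha$, $R_{\ge\alpha}$ denotes the ideal of $R$ generated by all homogeneous elements of degree at least $\alpha$. *)

From HB Require Import structures.
From mathcomp Require Import all_boot all_order all_algebra.
From mathcomp Require Import mpoly.
Set Implicit Arguments. Unset Strict Implicit. Unset Printing Implicit Defensive.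
Import Order.TTheory GRing.Theory.
Local Open Scope ring_scope.

Section Ideals.
Variable R : comNzRingType.

Definition ideal_gen (G : R -> Prop) : R -> Prop :=
  fun x => exists (n : nat) (c g : 'I_n -> R),
    (forall i, G (g i)) /\ x = \sum_(i < n) c i * g i.

Definition ideal_mul (I1 I2 : R -> Prop) : R -> Prop :=
  ideal_gen (fun x => exists a b, I1 a /\ I2 b /\ x = a * b).

Definition ideal_pow (I : R -> Prop) (n : nat) : R -> Prop :=
  iter n (ideal_mul I) (ideal_gen (fun x => x = 1)).

Definition ideal_eq (I1 I2 : R -> Prop) : Prop := forall x, I1 x <-> I2 x.
End Ideals.

Section Weighted.
Variables (k : nzRingType) (n : nat) (A : 'I_n -> nat).

Definition wdeg (mon : 'X_{1..n}) : nat := (\sum_(i < n) A i * mon i)%N.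

Definition whomog (d : nat) (f : {mpoly k[n]}) : Prop :=
  forall mon, mon \in msupp f -> wdeg mon = d.

Definition wcomp (d : nat) (f : {mpoly k[n]}) : {mpoly k[n]} :=
  \sum_(mon <- msupp f | wdeg mon == d) f@_mon *: 'X_[mon].
End Weighted.

(* For a graded quotient pi : k[X] ->> R (grading induced by the weights A):
   R_{>= alpha} = ideal of R generated by all homogeneous elements of degree >= alpha;
   the homogeneous elements of R of degree d are the images of the homogeneous
   polynomials of weighted degree d. *)
Definition Rge (k : nzRingType) (n : nat) (A : 'I_n -> nat) (R : comNzRingType)
  (pi : {mpoly k[n]} -> R) (alpha : nat) : R -> Prop :=
  ideal_gen (fun x => exists (d : nat) (f : {mpoly k[n]}),
                (alpha <= d)%N /\ whomog A d f /\ x = pi f).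

From HB Require Import structures.
From mathcomp Require Import all_boot all_order all_algebra.
From mathcomp Require Import mpoly.
From mathcomp Require Import zify.

Set Implicit Arguments.
Unset Strict Implicit.
Unset Printing Implicit Defensive.

(* R_{>=a} is generated by the images of the monomials of weighted degree
   >= a, so I^p = I * R_{>=(p-1)mA} reduces to a statement about monomials:
   every monomial of degree >= mA + tA contains a submonomial of degree
   exactly tA, whose cofactor then has degree >= mA.  Such a submonomial is
   built greedily: a monomial of degree > (m+1)(A-1) in m+1 variables has
   some X_i^{e_i} of degree >= A, hence is divisible by X_i^{A/A_i}, a block
   of degree exactly A. *)

Import GRing.Theory.
Local Open Scope ring_scope.

Section IdealGen.
Variable R : comNzRingType.
Implicit Types G H K P : R -> Prop.

Definition ideal_closed P :=
  [/\ P 0, forall x y, P x -> P y -> P (x + y) & forall r x, P x -> P (r * x)].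

Lemma ideal_gen_min G P : ideal_closed P -> (forall x, G x -> P x) ->
  forall x, ideal_gen G x -> P x.
Proof.
move=> [P0 PD PM] GP _ [n [c [g [Gg ->]]]].
by apply: big_ind => // i _; apply/PM/GP.
Qed.

Lemma ideal_gen_mem G x : G x -> ideal_gen G x.
Proof.
move=> Gx; exists 1%N, (fun=> 1), (fun=> x); split => //.
by rewrite big_ord1 mul1r.
Qed.

Lemma ideal_gen_closed G : ideal_closed (ideal_gen G).
Proof.
split.
- by exists 0%N, (fun=> 0), (fun=> 0); split => [[]//|]; rewrite big_ord0.
- move=> _ _ [n1 [c1 [g1 [Gg1 ->]]]] [n2 [c2 [g2 [Gg2 ->]]]].
  pose join T (f1 : 'I_n1 -> T) (f2 : 'I_n2 -> T) i :=
    match split i with inl j => f1 j | inr j => f2 j end.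
  exists (n1 + n2)%N, (join _ c1 c2), (join _ g1 g2); split.
    by move=> i; rewrite /join; case: (split i).
  rewrite big_split_ord /join; congr (_ + _); apply: eq_bigr => i _.
    by rewrite -[lshift _ _]/(unsplit (inl i)) unsplitK.
  by rewrite -[rshift _ _]/(unsplit (inr i)) unsplitK.
- move=> r _ [n [c [g [Gg ->]]]].
  exists n, (fun i => r * c i), g; split => //.
  by rewrite mulr_sumr; apply: eq_bigr => i _; rewrite mulrA.
Qed.

Lemma ideal_gen_sub G H : (forall x, G x -> ideal_gen H x) ->
  forall x, ideal_gen G x -> ideal_gen H x.
Proof. exact: ideal_gen_min (ideal_gen_closed H). Qed.

Lemma ideal_gen_mul G H K :
    (forall a b, G a -> H b -> ideal_gen K (a * b)) ->
  forall a b, ideal_gen G a -> ideal_gen H b -> ideal_gen K (a * b).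
Proof.
have [K0 KD KM] := ideal_gen_closed K.
move=> GHK a b Ga Hb; move: a Ga; apply: ideal_gen_min => [|a Ga].
  split=> [|x y Kx Ky|r x Kx]; first by rewrite mul0r.
    by rewrite mulrDl; apply: KD.
  by rewrite -mulrA; apply: KM.
move: b Hb; apply: ideal_gen_min => [|b Hb]; last exact: GHK.
split=> [|x y Kx Ky|r x Kx]; first by rewrite mulr0.
  by rewrite mulrDr; apply: KD.
by rewrite mulrCA; apply: KM.
Qed.

Lemma ideal_mulr_eq (I J J' : R -> Prop) :
  ideal_eq J J' -> ideal_eq (ideal_mul I J) (ideal_mul I J').
Proof.
move=> JJ' x; split; apply: ideal_gen_sub => _ [a [b [Ia [Jb ->]]]];
  by apply: ideal_gen_mem; exists a, b; rewrite JJ' in Jb *.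
Qed.
End IdealGen.

Section WeightedDegree.
Variables (n : nat) (A : 'I_n -> nat).
Implicit Types u v mon : 'X_{1..n}.

Lemma wdegD u v : wdeg A (u + v)%MM = (wdeg A u + wdeg A v)%N.
Proof.
by rewrite /wdeg -big_split; apply: eq_bigr => i _; rewrite mnmDE mulnDr.
Qed.

Lemma wdegB u v : (v <= u)%MM -> wdeg A (u - v)%MM = (wdeg A u - wdeg A v)%N.
Proof. by move=> /submK {2}<-; rewrite wdegD addnK. Qed.

Lemma wdeg_mulmn i c : wdeg A (U_(i) *+ c)%MM = (A i * c)%N.
Proof.
rewrite /wdeg (bigD1 i) //= big1 => [|j /negbTE ji].
  by rewrite mulmnE mnm1E eqxx mul1n addn0.
by rewrite mulmnE mnm1E eq_sym ji mul0n muln0.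
Qed.

Variable L : nat.
Hypotheses (L_gt0 : (0 < L)%N) (A_dvd_L : forall i, (A i %| L)%N).

Lemma wdeg_large_exponent mon : (n * L.-1 < wdeg A mon)%N ->
  exists i, (L <= A i * mon i)%N.
Proof.
move=> deg_gt; apply/existsP; apply: contraLR deg_gt => /existsPn small.
rewrite -leqNgt /wdeg (@leq_trans (\sum_(i < n) L.-1)) //.
  by apply: leq_sum => i _; move: (small i); rewrite -ltnNge; lia.
by rewrite sum_nat_const card_ord.
Qed.

Lemma wdeg_submonomial t mon : ((t + n.-1) * L <= wdeg A mon)%N ->
  exists2 v, (v <= mon)%MM & wdeg A v = (t * L)%N.
Proof.
elim: t mon => [|t IHt] mon deg_ge.
  exists 0%MM; first by apply/mnm_lepP => i; rewrite mnm0E.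
  by rewrite /wdeg big1 // => i _; rewrite mnm0E muln0.
have [i Li] : exists i, (L <= A i * mon i)%N.
  by apply: wdeg_large_exponent; apply: leq_trans deg_ge; case: n; nia.
have A_L : (A i * (L %/ A i) = L)%N by rewrite mulnC divnK.
pose block := (U_(i) *+ (L %/ A i))%MM.
have block_le : (block <= mon)%MM.
  apply/mnm_lepP => j; rewrite mulmnE mnm1E.
  have [<-|] := eqVneq i j; last by rewrite mul0n.
  have Ai_gt0 : (0 < A i)%N by nia.
  by rewrite mul1n -(leq_pmul2l Ai_gt0) A_L.
have wblock : wdeg A block = L by rewrite wdeg_mulmn.
have [v v_le wv] : exists2 v, (v <= mon - block)%MM & wdeg A v = (t * L)%N.
  by apply: IHt; rewrite wdegB // wblock; move: deg_ge; rewrite addSn mulSn; lia.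
exists (v + block)%MM; last by rewrite wdegD wv wblock mulSn addnC.
rewrite -(submK block_le); apply/mnm_lepP => j.
by rewrite !mnmDE leq_add2r (mnm_lepP v_le).
Qed.
End WeightedDegree.

Section WeightedIdeals.
Variables (k : nzRingType) (n : nat) (A : 'I_n -> nat).
Variables (R : comNzRingType) (pi : {rmorphism {mpoly k[n]} -> R}).

Definition monomials_ge (a : nat) : R -> Prop :=
  fun x => exists2 mon : 'X_{1..n}, (a <= wdeg A mon)%N & x = pi 'X_[mon].

Lemma RgeE a x : Rge A pi a x <-> ideal_gen (monomials_ge a) x.
Proof.
split; move: x; apply: ideal_gen_sub.
  move=> _ [d [f [a_le [f_hom ->]]]].
  have [P0 PD PM] := ideal_gen_closed (monomials_ge a).
  rewrite (mpolyE f) rmorph_sum big_seq; apply: big_ind => // mon mon_f.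
  rewrite -mul_mpolyC rmorphM; apply/PM/ideal_gen_mem.
  by exists mon; rewrite ?f_hom.
move=> _ [mon a_le ->]; apply: ideal_gen_mem.
exists (wdeg A mon), 'X_[mon]; split=> //; split=> // mon'.
by rewrite msuppX mem_seq1 => /eqP ->.
Qed.

Lemma Rge_mul a b x y : Rge A pi a x -> Rge A pi b y -> Rge A pi (a + b) (x * y).
Proof.
move=> /RgeE Rx /RgeE Ry; apply/RgeE; move: x y Rx Ry.
apply: ideal_gen_mul => _ _ [u a_le ->] [v b_le ->].
apply: ideal_gen_mem; exists (u + v)%MM; first by rewrite wdegD leq_add.
by rewrite mpolyXD rmorphM.
Qed.

Variable L : nat.
Hypotheses (L_gt0 : (0 < L)%N) (A_dvd_L : forall i, (A i %| L)%N).

Lemma ideal_mul_Rge a t : (n.-1 * L <= a)%N ->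
  ideal_eq (ideal_mul (Rge A pi a) (Rge A pi (t * L))) (Rge A pi (a + t * L)).
Proof.
move=> a_ge x; split.
  apply: ideal_gen_min (ideal_gen_closed _) _ x => _ [x1 [x2 [Rx1 [Rx2 ->]]]].
  exact: Rge_mul.
rewrite RgeE; apply: ideal_gen_sub => _ [mon deg_ge ->].
have [v v_le wv] : exists2 v, (v <= mon)%MM & wdeg A v = (t * L)%N.
  by apply: wdeg_submonomial => //; move: deg_ge; nia.
apply: ideal_gen_mem; exists (pi 'X_[mon - v]), (pi 'X_[v]); split; last split.
- by apply/RgeE/ideal_gen_mem; exists (mon - v)%MM; rewrite ?wdegB // wv; lia.
- by apply/RgeE/ideal_gen_mem; exists v; rewrite ?wv.
- by rewrite -rmorphM -mpolyXD submK.
Qed.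
End WeightedIdeals.

Theorem mainTheorem2
  (k : idomainType) (m : nat) (A : 'I_m.+1 -> nat)
  (hA : forall i, (0 < A i)%N)
  (R : idomainType) (pi : {rmorphism {mpoly k[m.+1]} -> R})
  (pi_surj : forall x : R, exists f, pi f = x)
  (J_homog : forall f, pi f = 0 -> forall d, pi (wcomp A d f) = 0)
  (p : nat) (hp : (2 <= p)%N) :
  let Alcm := (\big[lcmn/1%N]_(i < m.+1) A i)%N in
  let I := Rge A pi (m * Alcm) in
  ideal_eq (ideal_pow I p.-1) (Rge A pi (p.-1 * m * Alcm)) ->
  ideal_eq (ideal_pow I p) (Rge A pi (p * m * Alcm)).
Proof.
move=> L I powI.
have L_gt0 : (0 < L)%N.
  by apply: (big_ind (fun x => 0 < x)%N) => // x y; rewrite lcmn_gt0 => -> ->.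
have A_dvd_L i : (A i %| L)%N by rewrite (biglcmn_sup i).
case: p hp powI => [|q] // _; rewrite succnK => powI x.
apply: iff_trans (ideal_mulr_eq I powI x) _.
rewrite mulSn mulnDl; exact: ideal_mul_Rge.
Qed.
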